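(* There exists an elliptic curve $E$ defined over $\mathbf{Q}$ with $S_{x,y}(E) \geq 5$; that is, there exist an elliptic curve $E/\mathbf{Q}$ and five distinct rational points $P_1,\dots,P_5 \in E(\mathbf{Q})$ such that their $x$-coordinates, in some order, form an arithmetic progression with nonzero common difference, and their $y$-coordinates, in some (possibly different) order, also form an arithmetic progression with nonzero common difference.
   Context: An elliptic curve over $\mathbf{Q}$ is given by a general Weierstrass equation $Y^2 + a_1XY + a_3Y = X^3 + a_2X^2 + a_4X + a_6$ with $a_i \in \mathbf{Q}$ and nonzero discriminant. Rational points $P_0,\dots,P_n\in E$ form a simultaneous arithmetic progression if their $x$-coordinates form an arithmetic progression (with nonzero difference) in some order and their $y$-coordinates form an arithmetic progression (with nonzero difference) in some, possibly different, order. $S_{x,y}(E)$ denotes the maximal number of rational points of $E$ forming a simultaneous arithmetic progression. *)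

From HB Require Import structures.
From mathcomp Require Import all_boot all_order all_fingroup all_algebra.
Set Implicit Arguments. Unset Strict Implicit. Unset Printing Implicit Defensive.
Import Order.TTheory GRing.Theory Num.Theory.
Local Open Scope ring_scope.

(* General Weierstrass equation Y^2 + a1 XY + a3 Y = X^3 + a2 X^2 + a4 X + a6
   over Q, given by its coefficient list (a1, a2, a3, a4, a6). *)
Record weierstrass := Weierstrass { a1 : rat; a2 : rat; a3 : rat; a4 : rat; a6 : rat }.

(* Standard discriminant (Silverman III.1). *)
Definition wdisc (E : weierstrass) : rat :=
  let b2 := a1 E ^+ 2 + 4 * a2 E in
  let b4 := 2 * a4 E + a1 E * a3 E in
  let b6 := a3 E ^+ 2 + 4 * a6 E in
  let b8 := a1 E ^+ 2 * a6 E + 4 * a2 E * a6 E - a1 E * a3 E * a4 E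
            + a2 E * a3 E ^+ 2 - a4 E ^+ 2 in
  - b2 ^+ 2 * b8 - 8 * b4 ^+ 3 - 27 * b6 ^+ 2 + 9 * b2 * b4 * b6.

Definition is_elliptic (E : weierstrass) : Prop := wdisc E != 0.

Definition on_curve (E : weierstrass) (P : rat * rat) : Prop :=
  P.2 ^+ 2 + a1 E * P.1 * P.2 + a3 E * P.2
  = P.1 ^+ 3 + a2 E * P.1 ^+ 2 + a4 E * P.1 + a6 E.

Definition is_AP_some_order (n : nat) (f : 'I_n -> rat) : Prop :=
  exists (s : 'S_n) (a d : rat), d != 0 /\ forall i : 'I_n, f (s i) = a + (val i)%:R * d.

Definition simultaneous_AP (n : nat) (P : 'I_n -> rat * rat) : Prop :=
  is_AP_some_order (fun i => (P i).1) /\ is_AP_some_order (fun i => (P i).2).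

From mathcomp Require Import all_boot all_order all_fingroup all_algebra.
From mathcomp Require Import ring.
Import GRing.Theory Num.Theory.
Local Open Scope ring_scope.

(* The x-coordinates 0, 1, 2, 3, 4 and the y-coordinates 0, 1, 4, 3, 2 are both
   permutations of an arithmetic progression, and the general Weierstrass
   equation is linear in its five coefficients, so exactly one Weierstrass
   cubic passes through the five points (i, y_i); it happens to be smooth. *)

Lemma is_AP_some_order_natr (n : nat) :
  is_AP_some_order (fun i : 'I_n => (val i)%:R).
Proof. by exists 1%g, 0, 1; split=> // i; rewrite perm1 add0r mulr1. Qed.

Lemma is_AP_some_order_perm (n : nat) (f : 'I_n -> rat) (t : 'S_n) :
  is_AP_some_order f -> is_AP_some_order (f \o t).
Proof.
move=> [s [a [d [d_neq0 fs]]]]; exists (s * t^-1)%g, a, d; split=> // i.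
by rewrite /= permM permKV fs.
Qed.

Definition witness_curve : weierstrass := Weierstrass (-5/2) (-11/2) (-2) 1 0.

Definition witness_perm : 'S_5 := tperm (@Ordinal 5 2 isT) (@Ordinal 5 4 isT).

Definition witness_point (i : 'I_5) : rat * rat :=
  ((val i)%:R, (val (witness_perm i))%:R).

Lemma wdisc_witness_curve : wdisc witness_curve = - (797%:R / 4%:R).
Proof. by rewrite /wdisc /=; field. Qed.

Lemma witness_curve_elliptic : is_elliptic witness_curve.
Proof. by rewrite /is_elliptic wdisc_witness_curve oppr_eq0 mulf_neq0. Qed.

Lemma witness_point_inj : injective witness_point.
Proof. by move=> i j [/eqP]; rewrite eqr_nat => /eqP/val_inj. Qed.

Lemma witness_point_on_curve (i : 'I_5) : on_curve witness_curve (witness_point i).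
Proof.
case: i => -[|[|[|[|[|//]]]]] i_lt5;
  by rewrite /on_curve /witness_point /witness_perm permE /=; field.
Qed.

Lemma witness_simultaneous_AP : simultaneous_AP witness_point.
Proof.
split; first exact: is_AP_some_order_natr.
exact: is_AP_some_order_perm (is_AP_some_order_natr 5).
Qed.

Theorem theorem2 :
  exists (E : weierstrass) (P : 'I_5 -> rat * rat),
    is_elliptic E /\
    injective P /\
    (forall i, on_curve E (P i)) /\
    simultaneous_AP P.
Proof.
exists witness_curve, witness_point.
split; first exact: witness_curve_elliptic.
split; first exact: witness_point_inj.
split; first exact: witness_point_on_curve.
exact: witness_simultaneous_AP.
Qed.
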